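(* Let $\psi\in\mathcal H$ be a normalized eigenvector of $U_\Bbbk$, $U_\Bbbk\psi=e^{i\theta}\psi$, let $\Psi_\Bbbk=(\psi,\bar UP_{[\![1]\!]}\psi)/\Gamma^{1/2}$ with $\Gamma=1+\langle\psi,P_{[\![1]\!]}\psi\rangle$, and let $\bar\mu_\Bbbk([\![\mathrm y]\!])=\langle\Psi_\Bbbk,\widetilde P_{[\![\mathrm y]\!]}\Psi_\Bbbk\rangle$. Then for every integer $1\leq n<\Bbbk-1$, $$\frac1n h_n(\bar\mu_\Bbbk)\geq\frac1{\Bbbk-1}h_{\Bbbk-1}(\bar\mu_\Bbbk)-\frac{n\log2}{\Bbbk-1}.$$
   Context: Let $\Bbbk\geq3$ and $\mathcal H=(\mathbb C^2)^{\otimes\Bbbk}$ with orthonormal basis $|\mathrm x\rangle=|\mathrm x_1\rangle\otimes\cdots\otimes|\mathrm x_\Bbbk\rangle$, $\mathrm x_i\in\{0,1\}$. For a binary word $\mathrm w$ of length $m\leq\Bbbk$, $P_{[\![\mathrm w]\!]}$ is the orthogonal projection onto the span of the $|\mathrm x\rangle$ whose first $m$ digits equal $\mathrm w$. Let $\mathbf U$ be a $2\times2$ unitary with all entries of modulus $2^{-1/2}$, $\bar U|\mathrm x\rangle=|\mathrm x_2\rangle\otimes\cdots\otimes|\mathrm x_\Bbbk\rangle\otimes\mathbf U|\mathrm x_1\rangle$, $\sigma$ the unitary exchanging the last two tensor factors, and $P'_{[\![j]\!]}=\bar UP_{[\![j]\!]}\bar U^*$. Let $U_\Bbbk=\bar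 UP_{[\![0]\!]}+\sigma\bar U^2P_{[\![1]\!]}$, i.e. $U_\Bbbk|\mathrm x\rangle=|\mathrm x_2\rangle\otimes\cdots\otimes|\mathrm x_\Bbbk\rangle\otimes\mathbf U|\mathrm x_1\rangle$ if $\mathrm x_1=0$ and $U_\Bbbk|\mathrm x\rangle=|\mathrm x_3\rangle\otimes\cdots\otimes|\mathrm x_\Bbbk\rangle\otimes\mathbf U|\mathrm x_2\rangle\otimes\mathbf U|\mathrm x_1\rangle$ if $\mathrm x_1=1$. Tower space $\widetilde{\mathcal H}=\mathcal H\oplus P'_{[\![1]\!]}\mathcal H$ with direct-sum scalar product. For a binary word $\mathrm y$ of length $n\leq\Bbbk-1$, $\widetilde P_{[\![\mathrm y]\!]}=P_{[\![\mathrm y]\!]}\oplus P'_{[\![1]\!]}P_{[\![\mathrm y]\!]}$, and $h_n(\bar\mu_\Bbbk)=-\sum_{|\mathrm y|=n}\bar\mu_\Bbbk([\![\mathrm y]\!])\log\bar\mu_\Bbbk([\![\mathrm y]\!])$ (with $0\log0=0$). *)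

From HB Require Import structures.
From mathcomp Require Import all_boot all_order all_algebra.
From mathcomp Require Export complex.
From mathcomp Require Export reals exp.
Unset Printing Implicit Defensive.
Import Order.TTheory GRing.Theory Num.Theory.
Local Open Scope ring_scope.

Section QuantumWalk.
Variable R : realType.
Local Notation C := R[i].

(* Basis of H = (C^2)^{(x) k}: binary words x = x_1...x_k, encoded as
   k-tuples of booleans; digit x_{i+1} is [nth false x i]. *)
Definition word (k : nat) := k.-tuple bool.

Definition vec (k : nat) := word k -> C.
Definition op (k : nat) := word k -> word k -> C.

Definition app k (A : op k) (v : vec k) : vec k := fun z => \sum_(x : word k) A z x * v x.
Definition opmul k (A B : op k) : op k := fun z x => \sum_(y : word k) A z y * B y x.
Definition opadd k (A B : op k) : op k := fun z x => A z x + B z x.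
Definition adj k (A : op k) : op k := fun z x => (A x z)^*.
Definition inner k (u v : vec k) : C := \sum_(z : word k) (u z)^* * v z.

Definition bI (b : bool) : 'I_2 := inord (nat_of_bool b).

(* projection P_[[w]] onto span of |x> whose first |w| digits equal w *)
Definition Pw k (w : seq bool) : op k :=
  fun z x => ((z == x) && (take (size w) x == w))%:R.

(* Ubar |x> = |x_2> (x) ... (x) |x_k> (x) U |x_1>, with U|b> = sum_c U_{c b}|c> *)
Definition Ubar k (U : 'M[C]_2) : op k :=
  fun z x => (behead x == take k.-1 z)%:R *
             U (bI (nth false z k.-1)) (bI (nth false x 0)).

(* sigma: exchange of the last two tensor factors (positions k-1 and k) *)
Definition swapidx (k i : nat) : nat :=
  if i == k.-2 then k.-1 else if i == k.-1 then k.-2 else i.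
Definition sigma k : op k :=
  fun z x => (val z == [seq nth false x (swapidx k i) | i <- iota 0 k])%:R.

Definition Uk k (U : 'M[C]_2) : op k :=
  opadd k (opmul k (Ubar k U) (Pw k [:: false]))
        (opmul k (sigma k) (opmul k (opmul k (Ubar k U) (Ubar k U)) (Pw k [:: true]))).

Definition P'1 k (U : 'M[C]_2) : op k :=
  opmul k (opmul k (Ubar k U) (Pw k [:: true])) (adj k (Ubar k U)).

(* Tower space H (+) P'_[[1]] H, modelled as pairs of vectors of H whose second
   component lies in P'_[[1]] H, with the direct-sum scalar product. *)
Definition inner2 k (u v : vec k * vec k) : C := inner k u.1 v.1 + inner k u.2 v.2.

Definition tPw k (U : 'M[C]_2) (y : seq bool) (u : vec k * vec k) : vec k * vec k :=
  (app k (Pw k y) u.1, app k (opmul k (P'1 k U) (Pw k y)) u.2).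

Definition Gamma k (psi : vec k) : C := 1 + inner k psi (app k (Pw k [:: true]) psi).

Definition PsiK k (U : 'M[C]_2) (psi : vec k) : vec k * vec k :=
  (fun z => (sqrtC (Gamma k psi))^-1 * psi z,
   fun z => (sqrtC (Gamma k psi))^-1 * app k (opmul k (Ubar k U) (Pw k [:: true])) psi z).

(* bar mu_k([[y]]) = <Psi_k, tilde P_[[y]] Psi_k>  (a real number; we take the
   real part of the complex scalar product) *)
Definition mubar k (U : 'M[C]_2) (psi : vec k) (y : seq bool) : R :=
  complex.Re (inner2 k (PsiK k U psi) (tPw k U y (PsiK k U psi))).

Definition xlogx (t : R) : R := if t == 0 then 0 else t * ln t.

Definition hn k (U : 'M[C]_2) (psi : vec k) (n : nat) : R :=
  - \sum_(y : n.-tuple bool) xlogx (mubar k U psi (val y)).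

Definition unitary2 (U : 'M[C]_2) : Prop :=
  (map_mx Num.conj U)^T *m U = 1%:M /\ U *m (map_mx Num.conj U)^T = 1%:M.

End QuantumWalk.

(* Let Q(w) = <psi, P_[[w]] psi>, so that mubar([[y]]) = (Q(y) + Q(1y)) / Gamma.  Reading
   off the coordinates of U_k psi and using that the columns of U are orthonormal gives
   |lam|^2 Q(y) = Q(0y) + Q(10y) + Q(11y); at the empty word this forces |lam| = 1.  Hence
   mubar is consistent both under extension to the right and under extension to the left
   (shift invariance) on words of length at most k - 1.  For such a family the block
   entropies are subadditive by Gibbs' inequality, h_1 <= log 2, and writing k - 1 = j n + r
   with r < n gives h_(k-1) <= j h_n + r log 2 <= (k - 1) h_n / n + n log 2. *)

From Pilot Require Import Defs.
From HB Require Import structures.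
From mathcomp Require Import all_boot all_order all_algebra.
From mathcomp Require Import complex reals exp.
From mathcomp Require Import lra zify ring.
Import Order.TTheory GRing.Theory Num.Theory.
Local Open Scope ring_scope.

(** * Sums over binary words *)

Section WordSums.
Context {V : zmodType}.

Fixpoint bsum (n : nat) (F : seq bool -> V) : V :=
  if n is n'.+1 then bsum n' (fun s => F (false :: s)) + bsum n' (fun s => F (true :: s))
  else F [::].

Lemma bsumS n F :
  bsum n.+1 F = bsum n (fun s => F (false :: s)) + bsum n (fun s => F (true :: s)).
Proof. by []. Qed.

Lemma eq_bsum {n} {F G : seq bool -> V} :
  (forall s, size s = n -> F s = G s) -> bsum n F = bsum n G.
Proof.
elim: n F G => [|n IH] F G eqFG /=; first exact: eqFG.
by congr (_ + _); apply: IH => s hs; apply: eqFG; rewrite /= hs.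
Qed.

Lemma bsumD n F G : bsum n (fun s => F s + G s) = bsum n F + bsum n G.
Proof.
elim: n F G => [|n IH] F G //=.
by rewrite (IH (fun s => F (false :: s))) (IH (fun s => F (true :: s))) addrACA.
Qed.

Lemma bsum0 n : bsum n (fun _ => 0) = 0.
Proof. by elim: n => [|n IH] //=; rewrite IH addr0. Qed.

Lemma bsumN n F : bsum n (fun s => - F s) = - bsum n F.
Proof.
by apply/eqP; rewrite -addr_eq0 -bsumD (eq_bsum (G := fun _ => 0)) ?bsum0 // => s _; rewrite addNr.
Qed.

Lemma bsum_cat a b F :
  bsum (a + b) F = bsum a (fun x => bsum b (fun z => F (x ++ z))).
Proof.
elim: a F => [|a IH] F //=.
by rewrite (IH (fun s => F (false :: s))) (IH (fun s => F (true :: s))).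
Qed.

Lemma bsum_rcons n F :
  bsum n.+1 F = bsum n (fun s => F (rcons s false) + F (rcons s true)).
Proof. by rewrite -addn1 bsum_cat; apply: eq_bsum => s _ /=; rewrite !cats1. Qed.

Lemma exchange_bsum a b (F : seq bool -> seq bool -> V) :
  bsum a (fun x => bsum b (F x)) = bsum b (fun z => bsum a (fun x => F x z)).
Proof.
elim: a F => [|a IH] F //=.
by rewrite (IH (fun x => F (false :: x))) (IH (fun x => F (true :: x))) -bsumD.
Qed.

Lemma big_tuple_bool n (F : seq bool -> V) :
  \sum_(t : n.-tuple bool) F (val t) = bsum n F.
Proof.
elim: n F => [|n IH] F /=.
  by rewrite (big_pred1 [tuple]) // => t; apply/esym/eqP/tuple0.
rewrite (reindex (fun p : bool * n.-tuple bool => cons_tuple p.1 p.2)) /=; last first.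
  exists (fun t => (thead t, behead_tuple t)) => [[b t] _|t _]; first by congr pair; apply: val_inj.
  by apply: val_inj; rewrite /= [in RHS](tuple_eta t).
rewrite -(pair_big xpredT xpredT (fun b (t : n.-tuple bool) => F (b :: val t))) /=.
by rewrite big_bool /= addrC (IH (fun s => F (false :: s))) (IH (fun s => F (true :: s))).
Qed.
End WordSums.

Section WordSumsRing.
Context {V : pzRingType}.

Lemma bsum_distrr n (c : V) F : c * bsum n F = bsum n (fun s => c * F s).
Proof.
elim: n F => [|n IH] F //=.
by rewrite mulrDr (IH (fun s => F (false :: s))) (IH (fun s => F (true :: s))).
Qed.

Lemma bsum_pred1 n (w : seq bool) (F : seq bool -> V) : size w = n ->
  bsum n (fun s => (s == w)%:R * F s) = F w.
Proof.
elim: n w F => [|n IH] [|b w] F //=; first by rewrite ?eqxx mul1r.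
move=> [hw].
have hc c : bsum n (fun s => (c :: s == b :: w)%:R * F (c :: s)) = (c == b)%:R * F (c :: w).
  rewrite -(IH w (fun s => (c == b)%:R * F (c :: s))) //.
  by apply: eq_bsum => s _; rewrite eqseq_cons; case: (c == b); rewrite /= ?mul0r ?mul1r ?mulr0.
by rewrite !hc; case: b {hc}; rewrite /= ?mul0r ?mul1r ?add0r ?addr0.
Qed.

Lemma bsum_prefix n (w : seq bool) (F : seq bool -> V) : (size w <= n)%N ->
  bsum n (fun s => (take (size w) s == w)%:R * F s) = bsum (n - size w) (fun z => F (w ++ z)).
Proof.
move=> hw; rewrite -{1}(subnKC hw) bsum_cat.
rewrite (eq_bsum (G := fun x => (x == w)%:R * bsum (n - size w) (fun z => F (x ++ z)))).
  by rewrite bsum_pred1.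
by move=> x hx; rewrite bsum_distrr; apply: eq_bsum => z _; rewrite -hx take_size_cat.
Qed.
End WordSumsRing.

Section WordSumsNum.
Context {V : numDomainType}.

Lemma ler_bsum n (F G : seq bool -> V) : (forall s, size s = n -> F s <= G s) ->
  bsum n F <= bsum n G.
Proof.
elim: n F G => [|n IH] F G leFG /=; first exact: leFG.
by apply: lerD; apply: IH => s hs; apply: leFG; rewrite /= hs.
Qed.

Lemma bsum_ge0 n (F : seq bool -> V) : (forall s, size s = n -> 0 <= F s) ->
  0 <= bsum n F.
Proof. by move=> F_ge0; rewrite -(bsum0 n); apply: ler_bsum. Qed.
End WordSumsNum.

(** * Entropy of a consistent family of cylinder weights *)

Section LogInequalities.
Context {R : realType}.

Lemma xlogxE (t : R) : xlogx R t = t * ln t.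
Proof. by rewrite /xlogx; case: eqP => [->|_]; rewrite ?mul0r. Qed.

(* [ln x <= x - 1] applied at [x = q / p]. *)
Lemma gibbs_ineq (p q : R) : 0 <= p -> 0 < q ->
  - (p * ln p) <= - (p * ln q) + q - p.
Proof.
move=> p_ge0 q_gt0; have [->|p_neq0] := eqVneq p 0; first by rewrite !mul0r; lra.
have p_gt0 : 0 < p by rewrite lt0r p_neq0.
have ln_qp : ln (q / p) <= q / p - 1.
  rewrite -[in leLHS](subrKC 1 (q / p)); apply: le_ln1Dx.
  have : 0 < q / p by rewrite divr_gt0.
  lra.
rewrite ln_div ?posrE // in ln_qp.
have := ler_wpM2l p_ge0 ln_qp.
by rewrite mulrBr mulrBr mulr1 mulrCA divff ?mulr1 //; lra.
Qed.

Lemma gibbs_ineq_prod (p px pz : R) : 0 <= p -> p <= px -> p <= pz ->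
  - (p * ln p) <= - (p * ln px) - p * ln pz + (px * pz - p).
Proof.
move=> p_ge0 le_px le_pz; have [->|p_neq0] := eqVneq p 0.
  by have := mulr_ge0 (le_trans p_ge0 le_px) (le_trans p_ge0 le_pz); rewrite !mul0r; lra.
have p_gt0 : 0 < p by rewrite lt0r p_neq0.
have px_gt0 := lt_le_trans p_gt0 le_px; have pz_gt0 := lt_le_trans p_gt0 le_pz.
have := gibbs_ineq p (px * pz) p_ge0 (mulr_gt0 px_gt0 pz_gt0).
by rewrite lnM ?posrE // mulrDr; lra.
Qed.
End LogInequalities.

Section ConsistentMeasure.
Variables (R : realType) (m : nat) (mu : seq bool -> R).
Hypothesis mu_nil : mu [::] = 1.
Hypothesis mu_ge0 : forall y, (size y <= m)%N -> 0 <= mu y.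
Hypothesis mu_rcons : forall y, (size y < m)%N -> mu y = mu (rcons y false) + mu (rcons y true).
Hypothesis mu_cons : forall y, (size y < m)%N -> mu y = mu (false :: y) + mu (true :: y).

Definition entropy n := - bsum n (fun y => xlogx R (mu y)).

Lemma mu_prefix_le x z : (size (x ++ z) <= m)%N -> mu (x ++ z) <= mu x.
Proof.
elim/last_ind: z => [|z b IH]; first by rewrite cats0.
rewrite -rcons_cat size_rcons => hs; apply: le_trans (IH (ltnW hs)).
by rewrite [leRHS](mu_rcons _ hs); case: b; rewrite ?lerDr ?lerDl mu_ge0 ?size_rcons.
Qed.

Lemma mu_suffix_le x z : (size (x ++ z) <= m)%N -> mu (x ++ z) <= mu z.
Proof.
elim: x => [|b x IH] //= hs; apply: le_trans (IH (ltnW hs)).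
by rewrite [leRHS](mu_cons _ hs); case: b; rewrite ?lerDr ?lerDl mu_ge0.
Qed.

Lemma mu_le1 y : (size y <= m)%N -> mu y <= 1.
Proof. by rewrite -mu_nil; apply: (mu_prefix_le [::]). Qed.

Lemma bsum_mu n : (n <= m)%N -> bsum n mu = 1.
Proof.
elim: n => [|n IH] hn //=; rewrite -bsumD -IH ?(ltnW hn) //.
by apply: eq_bsum => s hs; rewrite -mu_cons // hs.
Qed.

Lemma bsum_mu_catr x b : (size x + b <= m)%N -> bsum b (fun z => mu (x ++ z)) = mu x.
Proof.
elim: b => [|b IH] hb; first by rewrite /= cats0.
rewrite bsum_rcons -IH; last by lia.
by apply: eq_bsum => s hs; rewrite -!rcons_cat -mu_rcons // size_cat hs; lia.
Qed.

Lemma bsum_mu_catl a z : (a + size z <= m)%N -> bsum a (fun x => mu (x ++ z)) = mu z.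
Proof.
elim: a => [|a IH] ha //=; rewrite -bsumD -IH; last by lia.
by apply: eq_bsum => s hs /=; rewrite -mu_cons // size_cat hs; lia.
Qed.

Lemma entropy_ge0 n : (n <= m)%N -> 0 <= entropy n.
Proof.
move=> hn; rewrite /entropy -bsumN; apply: bsum_ge0 => s hs.
rewrite xlogxE oppr_ge0 mulr_ge0_le0 ?mu_ge0 ?hs //.
by rewrite ln_le0 // mu_le1 // hs.
Qed.

Lemma entropy0 : entropy 0 = 0.
Proof. by rewrite /entropy /= mu_nil xlogxE ln1 mulr0 oppr0. Qed.

Lemma cross_entropy_prefix a b : (a + b <= m)%N ->
  bsum a (fun x => bsum b (fun z => - (mu (x ++ z) * ln (mu x)))) = entropy a.
Proof.
move=> hab; rewrite /entropy -bsumN; apply: eq_bsum => x hx.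
under eq_bsum => z _ do rewrite mulrC -mulNr.
by rewrite -bsum_distrr bsum_mu_catr ?hx // xlogxE mulNr mulrC.
Qed.

Lemma cross_entropy_suffix a b : (a + b <= m)%N ->
  bsum a (fun x => bsum b (fun z => - (mu (x ++ z) * ln (mu z)))) = entropy b.
Proof.
move=> hab; rewrite exchange_bsum /entropy -bsumN; apply: eq_bsum => z hz.
under eq_bsum => x _ do rewrite mulrC -mulNr.
by rewrite -bsum_distrr bsum_mu_catl ?hz // xlogxE mulNr mulrC.
Qed.

Lemma bsum_mu_independent_defect a b : (a + b <= m)%N ->
  bsum a (fun x => bsum b (fun z => mu x * mu z - mu (x ++ z))) = 0.
Proof.
move=> hab; rewrite -(bsum0 a); apply: eq_bsum => x hx.
rewrite bsumD bsumN -bsum_distrr bsum_mu_catr ?hx // bsum_mu ?mulr1 ?subrr //.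
by rewrite (leq_trans _ hab) // leq_addl.
Qed.

Lemma entropy_subadd a b : (a + b <= m)%N -> entropy (a + b) <= entropy a + entropy b.
Proof.
move=> hab; rewrite -[leRHS]addr0 -(bsum_mu_independent_defect a b hab).
rewrite -(cross_entropy_prefix a b hab) -(cross_entropy_suffix a b hab) -!bsumD.
rewrite /entropy bsum_cat -bsumN; apply: ler_bsum => x hx.
rewrite -bsumN -!bsumD; apply: ler_bsum => z hz.
have hxz : (size (x ++ z) <= m)%N by rewrite size_cat hx hz.
by rewrite xlogxE gibbs_ineq_prod ?mu_ge0 ?mu_prefix_le ?mu_suffix_le.
Qed.

Lemma entropy1_le : (0 < m)%N -> entropy 1 <= ln 2.
Proof.
move=> m_gt0; rewrite /entropy /= !xlogxE.
have half_gt0 : (0 : R) < 2^-1 by rewrite invr_gt0; lra.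
have := gibbs_ineq _ _ (mu_ge0 [:: false] m_gt0) half_gt0.
have := gibbs_ineq _ _ (mu_ge0 [:: true] m_gt0) half_gt0.
have := mu_cons [::] m_gt0; rewrite mu_nil => mu_sum.
have : mu [:: false] * ln 2 + mu [:: true] * ln 2 = ln (2 : R).
  by rewrite -mulrDl -mu_sum mul1r.
rewrite lnV ?posrE // !mulrN; lra.
Qed.

Lemma entropy_le_log2 r : (r <= m)%N -> entropy r <= r%:R * ln 2.
Proof.
elim: r => [|r IH] hr; first by rewrite entropy0 mul0r.
rewrite -addn1 natrD mulrDl mul1r; apply: le_trans (entropy_subadd r 1 _) _.
  by rewrite addn1.
by rewrite lerD ?IH ?(ltnW hr) // entropy1_le // (leq_ltn_trans _ hr).
Qed.

Lemma entropy_mul_le j n : (j * n <= m)%N -> entropy (j * n) <= j%:R * entropy n.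
Proof.
elim: j => [|j IH] hj; first by rewrite mul0n entropy0 mul0r.
rewrite mulSn -[j.+1]addn1 natrD mulrDl mul1r addrC.
apply: le_trans (entropy_subadd n (j * n) _) _; first by rewrite -mulSn.
by rewrite lerD // IH // (leq_trans _ hj) // mulSn leq_addl.
Qed.

(* Write [m = j n + r] with [r < n]. *)
Lemma entropy_rate n : (1 <= n)%N -> (n < m)%N ->
  entropy m / m%:R - n%:R * ln 2 / m%:R <= entropy n / n%:R.
Proof.
move=> n_gt0 lt_nm.
have m_gt0 : (0 : R) < m%:R by rewrite ltr0n (leq_trans n_gt0 (ltnW lt_nm)).
have n_gt0R : (0 : R) < n%:R by rewrite ltr0n.
set j := (m %/ n)%N; set r := (m %% n)%N.
have em : m = (j * n + r)%N by rewrite /j /r -divn_eq.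
have le_jn : (j * n <= m)%N by rewrite [X in (_ <= X)%N]em leq_addr.
have le_r : (r%:R : R) <= n%:R by rewrite ler_nat ltnW // ltn_mod.
have ent_m : entropy m <= j%:R * entropy n + r%:R * ln 2.
  rewrite {1}em; apply: le_trans (entropy_subadd _ _ _) _; first by rewrite -em.
  by rewrite lerD ?entropy_mul_le ?entropy_le_log2 // [X in (_ <= X)%N]em leq_addl.
have ln2_ge0 : (0 : R) <= ln 2 by rewrite ln_ge0 // ler1n.
have ent_n := entropy_ge0 n (ltnW lt_nm).
have le_jnR : (j%:R : R) * n%:R <= m%:R by rewrite -natrM ler_nat.
rewrite -mulrBl ler_pdivrMr // mulrAC ler_pdivlMr //.
have le_rn : r%:R * ln 2 <= n%:R * ln (2 : R) := ler_wpM2r ln2_ge0 le_r.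
apply: (@le_trans _ _ (j%:R * entropy n * n%:R)).
  by apply: (ler_wpM2r (ltW n_gt0R)); lra.
by rewrite mulrAC mulrC; apply: (ler_wpM2l ent_n).
Qed.
End ConsistentMeasure.

(** * Coordinates of the walk *)

Lemma bsum_cat2 (V : zmodType) n (F : seq bool -> V) :
  bsum n.+2 F = bsum n (fun w => bsum 2 (fun t => F (w ++ t))).
Proof. by rewrite -addn2 bsum_cat. Qed.

Lemma take_rcons_eq (T : Type) n (t : seq T) c : size t = n -> take n (rcons t c) = t.
Proof. by move=> <-; rewrite -cats1 take_size_cat. Qed.

Lemma nth_rcons_eq (T : Type) (x0 : T) n t c : size t = n -> nth x0 (rcons t c) n = c.
Proof. by move=> <-; rewrite nth_rcons ltnn eqxx. Qed.

Lemma take_rcons_leq (T : Type) n (t : seq T) c :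
  (n <= size t)%N -> take n (rcons t c) = take n t.
Proof. by move=> hn; rewrite -cats1 takel_cat. Qed.

Lemma cat2_rcons (T : Type) (w : seq T) a c : w ++ [:: a; c] = rcons (rcons w a) c.
Proof. by rewrite -!cats1 -catA. Qed.

Section Walk.
Variables (R : realType) (m : nat) (U : 'M[R[i]]_2).
Hypothesis hU : unitary2 R U.
Local Notation C := R[i].
Local Notation k := m.+2.
Local Notation app := (app R k).
Local Notation opmul := (opmul R k).
Local Notation Pw := (Pw R k).
Local Notation Ubar := (Ubar R k U).

(* Sequences of the wrong length are sent to the junk word false...false. *)
Definition word_of (s : seq bool) : word k := insubd (nseq_tuple k false) s.
Definition entry (v : vec R k) (s : seq bool) : C := v (word_of s).
Definition amp (c b : bool) : C := U (bI c) (bI b).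
Definition normsq (z : C) : C := z^* * z.
(* [weight v w] is <v, P_[[w]] v>. *)
Definition weight (v : vec R k) (w : seq bool) : C :=
  bsum k (fun s => (take (size w) s == w)%:R * normsq (entry v s)).

Lemma word_ofK s : size s = k -> val (word_of s) = s.
Proof. by move=> hs; rewrite insubdK //; apply/eqP. Qed.

Lemma sum_word (F : word k -> C) :
  \sum_(x : word k) F x = bsum k (fun s => F (word_of s)).
Proof.
rewrite -(big_tuple_bool k (fun s => F (word_of s))).
by apply: eq_bigr => x _; rewrite /word_of valKd.
Qed.

Lemma entry_opmul A B v s : entry (app (opmul A B) v) s = entry (app A (app B v)) s.
Proof.
rewrite /entry /Defs.app /Defs.opmul; under eq_bigr do rewrite big_distrl.
rewrite exchange_big; apply: eq_bigr => y _; rewrite big_distrr.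
by apply: eq_bigr => x _; rewrite /= mulrA.
Qed.

Lemma entry_opadd A B v s :
  entry (app (opadd R k A B) v) s = entry (app A v) s + entry (app B v) s.
Proof. by rewrite /entry /Defs.app -big_split; apply: eq_bigr => x _; rewrite mulrDl. Qed.

Lemma app_Pw w v z : app (Pw w) v z = (take (size w) z == w)%:R * v z.
Proof.
rewrite /Defs.app (bigD1 z) //= big1 ?addr0; first by rewrite /Defs.Pw eqxx.
by move=> x hx; rewrite /Defs.Pw eq_sym (negbTE hx) mul0r.
Qed.

Lemma entry_Pw w v s : size s = k ->
  entry (app (Pw w) v) s = (take (size w) s == w)%:R * entry v s.
Proof. by move=> hs; rewrite /entry app_Pw word_ofK. Qed.

Lemma entry_Pw1_eq v b s : size s = m.+1 ->
  entry (app (Pw [:: b]) v) (b :: s) = entry v (b :: s).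
Proof. by move=> hs; rewrite entry_Pw /= ?hs // take0 eqxx mul1r. Qed.

Lemma entry_Pw1_neq v b s : size s = m.+1 -> entry (app (Pw [:: b]) v) (~~ b :: s) = 0.
Proof. by move=> hs; rewrite entry_Pw /= ?hs // take0; case: b; rewrite mul0r. Qed.

Lemma entry_Ubar v t c : size t = m.+1 ->
  entry (app Ubar v) (rcons t c) =
  amp c false * entry v (false :: t) + amp c true * entry v (true :: t).
Proof.
move=> ht; rewrite {1}/entry /Defs.app sum_word bsumS.
have hb b : bsum m.+1 (fun s => Ubar (word_of (rcons t c)) (word_of (b :: s)) *
                                v (word_of (b :: s))) = amp c b * entry v (b :: t).
  rewrite -(bsum_pred1 m.+1 t (fun s => amp c b * entry v (b :: s))) //.
  apply: eq_bsum => s hs; rewrite /Defs.Ubar !word_ofK /= ?size_rcons ?ht ?hs //.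
  by rewrite take_rcons_eq // nth_rcons_eq // /amp /entry mulrA.
by rewrite !hb.
Qed.

Lemma entry_adjUbar v b s : size s = m.+1 ->
  entry (app (adj R k Ubar) v) (b :: s) =
  (amp false b)^* * entry v (rcons s false) + (amp true b)^* * entry v (rcons s true).
Proof.
move=> hs; rewrite {1}/entry /Defs.app sum_word bsum_rcons.
rewrite -(bsum_pred1 m.+1 s (fun t => (amp false b)^* * entry v (rcons t false) +
                                  (amp true b)^* * entry v (rcons t true))) //.
apply: eq_bsum => t ht; rewrite /adj /Defs.Ubar !word_ofK /= ?size_rcons ?ht ?hs //.
rewrite !take_rcons_eq // !nth_rcons_eq // !rmorphM !rmorph_nat (eq_sym s) /amp /entry.
ring.
Qed.

Lemma entry_UbarP1 v t c : size t = m.+1 ->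
  entry (app (opmul Ubar (Pw [:: true])) v) (rcons t c) = amp c true * entry v (true :: t).
Proof.
move=> ht; rewrite entry_opmul entry_Ubar // entry_Pw1_eq //.
by rewrite (entry_Pw1_neq _ true) // mulr0 add0r.
Qed.

Lemma swapidx_last2 (w : seq bool) a c : size w = m ->
  [seq nth false (w ++ [:: a; c]) (swapidx k i) | i <- iota 0 k] = w ++ [:: c; a].
Proof.
move=> hw; have -> : iota 0 k = iota 0 m ++ [:: m; m.+1] by rewrite -addn2 iotaD.
rewrite map_cat; congr cat.
  rewrite -[RHS](take_size_cat [:: a; c] hw).
  rewrite -(map_nth_iota0 false) ?size_cat ?hw ?leq_addr //.
  apply/eq_in_map => i; rewrite mem_iota add0n => /= lt_im.
  by rewrite /swapidx /= ifN ?ifN //; apply/eqP; lia.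
rewrite /swapidx /= eqxx (gtn_eqF (ltnSn m)) eqxx !nth_cat hw ltnn subnn /=.
have -> : (m.+1 < m)%N = false by lia.
by rewrite subSnn.
Qed.

Lemma entry_sigma v w a c : size w = m ->
  entry (app (sigma R k) v) (w ++ [:: a; c]) = entry v (w ++ [:: c; a]).
Proof.
move=> hw; rewrite {1}/entry /Defs.app sum_word.
rewrite -(bsum_pred1 k (w ++ [:: c; a]) (entry v)) ?size_cat ?hw ?addn2 //.
rewrite !bsum_cat2; apply: eq_bsum => x hx; apply: eq_bsum => -[|b1 [|b2 []]] // _.
rewrite /sigma !word_ofK ?size_cat ?hx ?hw ?addn2 // (swapidx_last2 x b1 b2 hx).
rewrite !eqseq_cat ?hx ?hw //.
congr (_%:R * _); rewrite (eq_sym w); congr andb.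
by case: a b1 b2 c => [] [] [] [].
Qed.

Lemma entry_Uk v w a c : size w = m ->
  entry (app (Uk R k U) v) (w ++ [:: a; c]) =
  amp c false * entry v (false :: rcons w a) +
  amp c true * (amp a false * entry v [:: true, false & w] +
                amp a true * entry v [:: true, true & w]).
Proof.
move=> hw; rewrite /Uk entry_opadd !entry_opmul entry_sigma // !entry_opmul !cat2_rcons.
have hw1 b : size (b :: w) = m.+1 by rewrite /= hw.
rewrite !entry_Ubar ?size_rcons ?hw // -!rcons_cons !entry_Ubar //.
rewrite !entry_Pw1_eq ?size_rcons ?hw // (entry_Pw1_neq _ false) ?size_rcons ?hw //.
rewrite !(entry_Pw1_neq _ true) ?hw1 //.
ring.
Qed.

Lemma amp_col_orth b b' :
  (amp false b)^* * amp false b' + (amp true b)^* * amp true b' = (b == b')%:R.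
Proof.
have bIf : bI false = ord0 by apply: val_inj; rewrite /= inordK.
have bIt : bI true = ord_max by apply: val_inj; rewrite /= inordK.
have := congr1 (fun M : 'M[C]_2 => M (bI b) (bI b')) hU.1.
rewrite !mxE !big_ord_recl big_ord0 addr0 !mxE /amp.
have -> : fintype.lift ord0 ord0 = ord_max :> 'I_2 by apply: val_inj.
rewrite -bIf -bIt => ->.
by case: b; case: b'; rewrite ?bIf ?bIt.
Qed.

Lemma normsq_amp_col b : normsq (amp false b) + normsq (amp true b) = 1.
Proof. by rewrite /normsq amp_col_orth eqxx. Qed.

Lemma normsq_amp_comb x y :
  normsq (amp false false * x + amp false true * y) +
  normsq (amp true false * x + amp true true * y) = normsq x + normsq y.
Proof.
have o00 := amp_col_orth false false; have o01 := amp_col_orth false true.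
have o10 := amp_col_orth true false; have o11 := amp_col_orth true true.
rewrite /= in o00 o01 o10 o11.
rewrite /normsq !rmorphD !rmorphM.
set x00 := amp false false in o00 o01 o10 o11 *.
set x01 := amp false true in o00 o01 o10 o11 *.
set x10 := amp true false in o00 o01 o10 o11 *.
set x11 := amp true true in o00 o01 o10 o11 *.
have -> : (x00^* * x^* + x01^* * y^*) * (x00 * x + x01 * y) +
          (x10^* * x^* + x11^* * y^*) * (x10 * x + x11 * y) =
  x^* * x * (x00^* * x00 + x10^* * x10) + x^* * y * (x00^* * x01 + x10^* * x11) +
  y^* * x * (x01^* * x00 + x11^* * x10) + y^* * y * (x01^* * x01 + x11^* * x11) by ring.
by rewrite o00 o01 o10 o11 /=; ring.
Qed.

Lemma normsq_ge0 (z : C) : 0 <= normsq z.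
Proof. by rewrite /normsq -normCKC exprn_ge0. Qed.

Lemma normsqM (a b : C) : normsq (a * b) = normsq a * normsq b.
Proof. by rewrite /normsq rmorphM; ring. Qed.

Lemma weight_ge0 v (w : seq bool) : 0 <= weight v w.
Proof. by apply: bsum_ge0 => s _; rewrite mulr_ge0 ?ler0n ?normsq_ge0. Qed.

Lemma weight_prefix v (w : seq bool) : (size w <= k)%N ->
  weight v w = bsum (k - size w) (fun z => normsq (entry v (w ++ z))).
Proof. exact: bsum_prefix. Qed.

Lemma weight_rcons v (w : seq bool) : (size w < k)%N ->
  weight v w = weight v (rcons w false) + weight v (rcons w true).
Proof.
move=> hw; rewrite !weight_prefix ?size_rcons ?(ltnW hw) //.
have -> : (k - size w = (k - (size w).+1).+1)%N by lia.
by rewrite bsumS; congr (_ + _); apply: eq_bsum => z _; rewrite cat_rcons.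
Qed.

Lemma weight_cons_true v (y : seq bool) :
  weight v (true :: y) =
  bsum m.+1 (fun t => (take (size y) t == y)%:R * normsq (entry v (true :: t))).
Proof.
rewrite /weight bsumS (eq_bsum (G := fun _ => 0)) ?bsum0 ?add0r; last first.
  by move=> t _ /=; rewrite ?eqseq_cons /= mul0r.
by apply: eq_bsum => t _ /=; rewrite ?eqseq_cons ?eqxx.
Qed.

Lemma bsum_normsq_Uk v (y : seq bool) : (size y <= m)%N ->
  bsum k (fun s => (take (size y) s == y)%:R * normsq (entry (app (Uk R k U) v) s)) =
  weight v (false :: y) + weight v [:: true, false & y] + weight v [:: true, true & y].
Proof.
move=> hy; rewrite bsum_prefix; last by lia.
rewrite !weight_prefix; try by rewrite /=; lia.
have -> : (k - size y = (m - size y).+2)%N by lia.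
have -> : (k - size (false :: y) = (m - size y).+1)%N by rewrite /=; lia.
have e2 b b' : (k - size [:: b, b' & y] = m - size y)%N by rewrite /=; lia.
rewrite !e2 bsum_cat2 bsum_rcons -!bsumD; apply: eq_bsum => x hx /=.
have hyx : size (y ++ x) = m by rewrite size_cat hx; lia.
rewrite !catA !entry_Uk // !normsq_amp_comb addrACA normsq_amp_comb.
by rewrite !rcons_cat addrA.
Qed.

Lemma weight_eigen v lam : (forall z, app (Uk R k U) v z = lam * v z) ->
  forall y : seq bool, (size y <= m)%N ->
  normsq lam * weight v y =
  weight v (false :: y) + weight v [:: true, false & y] + weight v [:: true, true & y].
Proof.
move=> heig y hy; rewrite -bsum_normsq_Uk // /weight bsum_distrr.
by apply: eq_bsum => s _; rewrite /entry heig normsqM mulrCA.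
Qed.

(* For a normalized eigenvector the eigenvalue has modulus one, by the case [y = [::]]. *)
Lemma weight_shift v lam : (forall z, app (Uk R k U) v z = lam * v z) ->
  weight v [::] = 1 -> forall y : seq bool, (size y <= m)%N ->
  weight v y =
  weight v (false :: y) + weight v [:: true, false & y] + weight v [:: true, true & y].
Proof.
move=> heig w_nil.
have lam1 : normsq lam = 1.
  have := weight_eigen v lam heig [::] (leq0n m); rewrite w_nil mulr1 => ->.
  by rewrite -addrA -(weight_rcons v [:: true]) // -(weight_rcons v [::]).
by move=> y hy; rewrite -(weight_eigen v lam heig y hy) lam1 mul1r.
Qed.

Lemma inner_entry u v : inner R k u v = bsum k (fun s => (entry u s)^* * entry v s).
Proof. exact: sum_word. Qed.

Lemma weight_nil v : weight v [::] = inner R k v v.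
Proof. by rewrite inner_entry; apply: eq_bsum => s _; rewrite take0 eqxx /= mulr1n mul1r. Qed.

Lemma Gamma_weight v : Gamma R k v = 1 + weight v [:: true].
Proof.
rewrite /Gamma inner_entry; congr (_ + _); apply: eq_bsum => s hs.
by rewrite entry_Pw // /normsq; ring.
Qed.

Lemma inner_scale_Pw v (c0 : C) (y : seq bool) :
  inner R k (fun z => c0 * v z) (app (Pw y) (fun z => c0 * v z)) = c0^* * c0 * weight v y.
Proof.
rewrite inner_entry /weight bsum_distrr; apply: eq_bsum => s hs.
by rewrite entry_Pw // /entry rmorphM /normsq; ring.
Qed.

Lemma entry_P'1 v (c0 : C) (y t : seq bool) c : (size y <= m.+1)%N -> size t = m.+1 ->
  entry (app (opmul (P'1 R k U) (Pw y)) (fun z => c0 * app (opmul Ubar (Pw [:: true])) v z))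
        (rcons t c) =
  (take (size y) t == y)%:R * (c0 * (amp c true * entry v (true :: t))).
Proof.
move=> hy ht; set W := fun z => _.
have hW c' : entry W (rcons t c') = c0 * (amp c' true * entry v (true :: t)).
  by rewrite -entry_UbarP1.
rewrite /P'1 !entry_opmul entry_Ubar // entry_Pw1_eq //.
rewrite (entry_Pw1_neq _ true) // mulr0 add0r.
rewrite entry_adjUbar // !entry_Pw ?size_rcons ?ht // !hW !take_rcons_leq ?ht //.
rewrite -[RHS]mulr1 -(normsq_amp_col true) /normsq; ring.
Qed.

Lemma inner_scale_P'1 v (c0 : C) (y : seq bool) : (size y <= m.+1)%N ->
  inner R k (fun z => c0 * app (opmul Ubar (Pw [:: true])) v z)
    (app (opmul (P'1 R k U) (Pw y)) (fun z => c0 * app (opmul Ubar (Pw [:: true])) v z)) =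
  c0^* * c0 * weight v (true :: y).
Proof.
move=> hy; rewrite inner_entry bsum_rcons weight_cons_true bsum_distrr.
apply: eq_bsum => t ht; rewrite !entry_P'1 //.
have hW c : entry (fun z => c0 * app (opmul Ubar (Pw [:: true])) v z) (rcons t c) =
            c0 * (amp c true * entry v (true :: t)) by rewrite -entry_UbarP1.
rewrite !hW !rmorphM -[RHS]mulr1 -(normsq_amp_col true) /normsq; ring.
Qed.

(** * The measure mubar *)

Lemma ReD (a b : C) : complex.Re (a + b) = complex.Re a + complex.Re b.
Proof. by case: a => ? ?; case: b. Qed.

Lemma mubar_weight v (y : seq bool) : (size y <= m.+1)%N ->
  mubar R k U v y = complex.Re ((weight v y + weight v (true :: y)) / Gamma R k v).
Proof.
move=> hy; rewrite /mubar /inner2 /tPw /PsiK /=.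
set c0 := (sqrtC (Gamma R k v))^-1.
have Gamma_ge0 : 0 <= Gamma R k v by rewrite Gamma_weight addr_ge0 ?weight_ge0.
have c0_norm : c0^* * c0 = (Gamma R k v)^-1.
  have c0_real : c0^* = c0 by apply/conj_Creal/ger0_real; rewrite invr_ge0 sqrtC_ge0.
  by rewrite c0_real /c0 -expr2 exprVn sqrtCK.
rewrite inner_scale_Pw inner_scale_P'1 // c0_norm; congr complex.Re; ring.
Qed.

Lemma Re_ge0 (x : C) : 0 <= x -> 0 <= complex.Re x.
Proof. by rewrite lecE => /andP[]. Qed.

Lemma Gamma_ge1 v : 1 <= Gamma R k v.
Proof. by rewrite Gamma_weight lerDl weight_ge0. Qed.

Lemma mubar_nil v : inner R k v v = 1 -> mubar R k U v [::] = 1.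
Proof.
move=> v_normed; have Gamma_neq0 : Gamma R k v != 0.
  by rewrite lt0r_neq0 // (lt_le_trans ltr01 (Gamma_ge1 v)).
by rewrite mubar_weight // weight_nil v_normed -Gamma_weight mulfV.
Qed.

Lemma mubar_ge0 v y : (size y <= m.+1)%N -> 0 <= mubar R k U v y.
Proof.
move=> hy; rewrite mubar_weight //; apply/Re_ge0/mulr_ge0.
  by rewrite addr_ge0 ?weight_ge0.
by rewrite invr_ge0 (le_trans ler01 (Gamma_ge1 v)).
Qed.

Lemma mubar_rcons v y : (size y < m.+1)%N ->
  mubar R k U v y = mubar R k U v (rcons y false) + mubar R k U v (rcons y true).
Proof.
move=> hy; rewrite !mubar_weight ?size_rcons ?(ltnW hy) // -ReD; congr complex.Re.
rewrite [weight v y]weight_rcons ?[weight v (true :: y)]weight_rcons /=; try lia.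
ring.
Qed.

Lemma mubar_cons v lam : inner R k v v = 1 ->
  (forall z, app (Uk R k U) v z = lam * v z) ->
  forall y, (size y < m.+1)%N ->
  mubar R k U v y = mubar R k U v (false :: y) + mubar R k U v (true :: y).
Proof.
move=> v_normed heig y hy; rewrite !mubar_weight ?(ltnW hy) // -ReD; congr complex.Re.
rewrite [weight v y](weight_shift v lam heig) ?weight_nil //; ring.
Qed.
End Walk.

Theorem proposition9 (R : realType) (k : nat) (U : 'M[R[i]]_2) (psi : vec R k)
    (n : nat) :
  (3 <= k)%N ->
  unitary2 R U ->
  (forall i j : 'I_2, `|U i j| = (sqrtC 2)^-1) ->
  inner R k psi psi = 1 ->
  (exists lam : R[i], forall z, app R k (Uk R k U) psi z = lam * psi z) ->
  (1 <= n)%N -> (n < k.-1)%N ->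
  hn R k U psi (k.-1) / (k.-1)%:R - n%:R * ln 2 / (k.-1)%:R <= hn R k U psi n / n%:R.
Proof.
move=> hk hU _ psi_normed [lam heig] n_ge1 lt_nk.
have [m km] : exists m, k = m.+2 by exists k.-2; lia.
subst k.
have hn_entropy j : hn R m.+2 U psi j = entropy R (mubar R m.+2 U psi) j.
  by rewrite /hn /entropy (big_tuple_bool j (fun y => xlogx R (mubar R m.+2 U psi y))).
rewrite !hn_entropy; apply: entropy_rate => //.
- exact: mubar_nil.
- exact: mubar_ge0.
- exact: mubar_rcons.
- by apply: mubar_cons.
Qed.
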